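(* Let $G$ be a distance-regular graph with degree $k$, parameter $\lambda>0$, and least adjacency eigenvalue $s$. Then \[ \lambda + \frac{k}{\lambda} > \frac{k}{|s|}. \]
   Context: A connected graph is distance-regular if for any two vertices $u,v$ at distance $i$, the numbers of neighbors of $v$ at distance $i-1$, $i$, and $i+1$ from $u$ depend only on $i$. Here $k$ is the degree, $\lambda$ is the number of common neighbors of two adjacent vertices, and $s$ is the least eigenvalue of the adjacency matrix ($s<0$). *)

From mathcomp Require Import all_boot all_order all_algebra.
From mathcomp Require Import reals.
Set Implicit Arguments. Unset Strict Implicit. Unset Printing Implicit Defensive.
Import Order.TTheory GRing.Theory Num.Theory.

Section Graphs.
Variable T : finType.
Variable e : rel T.

Definition simple_graph := symmetric e /\ irreflexive e.

Fixpoint walk (n : nat) (x y : T) : bool :=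
  if n is m.+1 then [exists z, e x z && walk m z y] else x == y.

Definition gdist (x y : T) (i : nat) : bool :=
  walk i x y && [forall j : 'I_i, ~~ walk j x y].

Definition gconnected := forall x y : T, exists i, gdist x y i.

Definition distance_regular :=
  simple_graph /\ gconnected /\
  exists c a b : nat -> nat, forall (u v : T) (i : nat), gdist u v i ->
    [/\ 0 < i -> #|[set w | e v w && gdist u w i.-1]| = c i,
        #|[set w | e v w && gdist u w i]| = a i &
        #|[set w | e v w && gdist u w i.+1]| = b i].

Definition regular_deg (k : nat) := forall v : T, #|[set w | e v w]| = k.

Definition lambda_param (l : nat) :=
  forall u v : T, e u v -> #|[set w | e u w && e v w]| = l.
End Graphs.

Definition adjmx (R : nzRingType) (n : nat) (e : rel 'I_n) : 'M[R]_n :=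
  (\matrix_(i, j) (e i j)%:R)%R.

Definition least_eigenvalue (R : realType) (n : nat) (A : 'M[R]_n) (s : R) :=
  eigenvalue A s /\ forall t, eigenvalue A t -> (s <= t)%R.

(** The eigenvalues [θ_j] of the adjacency matrix are all at least [s], and the
    traces of [A], [A^2], [A^3] give their first moments: [Σ θ_j = 0],
    [Σ θ_j^2 = nk] and [Σ θ_j^3 = nkλ].  Hence
    [0 <= Σ (θ_j - s)(θ_j - λ)^2 = n(-kλ - s(k + λ^2))], and equality would force
    every [θ_j] into [{s, λ}], whence [Σ θ_j (θ_j - s)(θ_j - λ) = -nks = 0],
    impossible.  So [-s(k + λ^2) > kλ], which is the claim divided by [-sλ]. *)
From mathcomp Require Import all_boot all_order all_algebra.
From mathcomp Require Import reals complex.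
From mathcomp Require Import ring lra.
Set Implicit Arguments. Unset Strict Implicit. Unset Printing Implicit Defensive.
Import Order.TTheory GRing.Theory Num.Theory.
Local Open Scope ring_scope.

Section EigenvalueMoments.
Variables (R : realFieldType) (I : finType) (d : I -> R) (s K L : R).
Let N : R := #|I|%:R.
Hypotheses (d_ge : forall j, s <= d j) (K_gt0 : 0 < K) (L_gt0 : 0 < L)
  (I_gt0 : (0 < #|I|)%N).
Hypotheses (sum_d : \sum_j d j = 0) (sum_d2 : \sum_j d j ^+ 2 = N * K)
  (sum_d3 : \sum_j d j ^+ 3 = N * K * L).

Lemma sum_quadratic_weight : \sum_j (d j - s) * (d j - L) = N * (K + s * L).
Proof.
rewrite (eq_bigr (fun j => d j ^+ 2 - (s + L) * d j + s * L));
  last by move=> j _; ring.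
rewrite !big_split /= sumrN sum_d2 -!mulr_sumr sum_d sumr_const.
by rewrite -mulr_natr -/N; ring.
Qed.

Lemma sum_cubic_weight : \sum_j d j * ((d j - s) * (d j - L)) = - (N * K * s).
Proof.
rewrite (eq_bigr (fun j => d j ^+ 3 - (s + L) * d j ^+ 2 + s * L * d j));
  last by move=> j _; ring.
rewrite !big_split /= sumrN sum_d3 -[\sum_j (s + L) * _]mulr_sumr.
by rewrite -[\sum_j s * L * _]mulr_sumr sum_d2 sum_d; ring.
Qed.

Lemma sum_shifted_sqr_weight :
  \sum_j (d j - s) * (d j - L) ^+ 2 = N * (- (K * L) - s * (K + L ^+ 2)).
Proof.
rewrite (eq_bigr (fun j => d j * ((d j - s) * (d j - L))
  - L * ((d j - s) * (d j - L)))); last by move=> j _; ring.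
by rewrite sumrB -mulr_sumr sum_cubic_weight sum_quadratic_weight; ring.
Qed.

Lemma least_eigenvalue_gap_gt0 : 0 < - (K * L) - s * (K + L ^+ 2).
Proof.
have N_gt0 : 0 < N by rewrite ltr0n.
have weight_ge0 j : 0 <= (d j - s) * (d j - L) ^+ 2.
  by rewrite mulr_ge0 ?sqr_ge0 ?subr_ge0.
have : 0 <= \sum_j (d j - s) * (d j - L) ^+ 2 by exact: sumr_ge0.
rewrite sum_shifted_sqr_weight pmulr_rge0 // le_eqVlt => /orP[/eqP gap0|//].
have sum0 : \sum_j (d j - s) * (d j - L) ^+ 2 = 0.
  by rewrite sum_shifted_sqr_weight -gap0 mulr0.
have root_sL j : (d j - s) * (d j - L) = 0.
  have /(_ j isT)/eqP := psumr_eq0P (fun i _ => weight_ge0 i) sum0.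
  by rewrite expr2 mulrA mulf_eq0 => /orP[/eqP|/eqP ->]; rewrite ?mulr0.
have : \sum_j d j * ((d j - s) * (d j - L)) = 0.
  by rewrite big1 // => j _; rewrite root_sL mulr0.
rewrite sum_cubic_weight => /eqP; rewrite oppr_eq0 !mulf_eq0.
rewrite (gt_eqF N_gt0) (gt_eqF K_gt0) /= => /eqP s0.
move: gap0; rewrite s0 mul0r subr0 => /eqP.
by rewrite eq_sym oppr_eq0 mulf_eq0 !gt_eqF.
Qed.

Lemma least_eigenvalue_bound : K / `|s| < L + K / L.
Proof.
have gap := least_eigenvalue_gap_gt0.
have KL_gt0 : 0 < K * L by rewrite mulr_gt0.
have s_lt0 : s < 0.
  by rewrite -(@pmulr_llt0 _ (K + L ^+ 2)) ?addr_gt0 ?exprn_gt0 //; lra.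
rewrite ltr0_norm // ltr_pdivrMr ?oppr_gt0 // -subr_gt0.
have -> : (L + K / L) * - s - K = (- (K * L) - s * (K + L ^+ 2)) / L.
  by field; rewrite gt_eqF.
by rewrite divr_gt0.
Qed.

End EigenvalueMoments.

Lemma sum_indicator_card (R : nzRingType) (T : finType) (P : pred T) :
  \sum_(x : T) ((P x : nat)%:R : R) = #|[set x | P x]|%:R.
Proof.
rewrite -sum1dep_card natr_sum [RHS]big_mkcond /=.
by apply: eq_bigr => x _; case: (P x).
Qed.

Section AdjacencyMatrix.
Variables (R : nzRingType) (n : nat) (e : rel 'I_n).
Local Notation A := (adjmx R e).
Hypothesis e_sym : symmetric e.

Lemma tr_adjmx : A^T = A.
Proof. by apply/matrixP => i j; rewrite !mxE e_sym. Qed.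

Lemma adjmx_sqrE i j : (A ^+ 2) i j = #|[set w | e i w && e j w]|%:R.
Proof.
rewrite expr2 -mulmxE mxE -sum_indicator_card; apply: eq_bigr => w _.
by rewrite !mxE (e_sym w j) -natrM mulnb.
Qed.

Lemma mxtrace_adjmx : irreflexive e -> \tr A = 0.
Proof. by move=> e_irr; rewrite /mxtrace big1 // => i _; rewrite mxE e_irr. Qed.

Lemma mxtrace_adjmx_sqr k : regular_deg e k -> \tr (A ^+ 2) = (n * k)%:R.
Proof.
move=> e_reg; rewrite /mxtrace (eq_bigr (fun=> k%:R)).
  by rewrite sumr_const card_ord natrM mulr_natl.
move=> i _; rewrite adjmx_sqrE -(e_reg i).
by congr _%:R; apply: eq_card => w; rewrite !inE andbb.
Qed.

Lemma mxtrace_adjmx_cube k l : regular_deg e k -> lambda_param e l ->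
  \tr (A ^+ 3) = (n * k * l)%:R.
Proof.
move=> e_reg e_lam; rewrite /mxtrace (eq_bigr (fun=> (k * l)%:R)).
  by rewrite sumr_const card_ord
  -mulnA [RHS]natrM mulr_natl.
move=> i _; rewrite exprS -mulmxE mxE.
transitivity (\sum_j (e i j : nat)%:R * (l%:R : R)).
  apply: eq_bigr => j _; rewrite (adjmx_sqrE j i) mxE.
  case: (boolP (e i j)) => [e_ij|_] /=; last by rewrite mulr0n !mul0r.
  by rewrite (e_lam j i) ?mulr1n // e_sym.
by rewrite -mulr_suml sum_indicator_card e_reg natrM.
Qed.

End AdjacencyMatrix.

Lemma diag_mx_expn (R : pzRingType) n (d : 'rV[R]_n) m :
  diag_mx d ^+ m = diag_mx (map_mx (fun x : R => x ^+ m) d).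
Proof.
elim: m => [|m IHm]; apply/matrixP => i j.
  by rewrite !mxE expr0.
by rewrite exprS -mulmxE IHm mul_diag_mx !mxE mulrnAr exprS.
Qed.

Lemma mxtrace_diag_mx_expn (R : pzRingType) n (d : 'rV[R]_n) m :
  \tr (diag_mx d ^+ m) = \sum_j d 0 j ^+ m.
Proof.
by rewrite diag_mx_expn mxtrace_diag; apply: eq_bigr => j _; rewrite mxE.
Qed.

Lemma conjmx_expn (R : comUnitRingType) n (P X : 'M[R]_n) m : P \in unitmx ->
  (invmx P *m X *m P) ^+ m = invmx P *m X ^+ m *m P.
Proof.
move=> P_unit; elim: m => [|m IHm].
  by rewrite !expr0 mulmx1 mulVmx.
rewrite !exprS -!mulmxE IHm !mulmxA; congr (_ *m _).
by rewrite -[_ *m invmx P]mulmxA mulmxV // mulmx1.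
Qed.

Lemma mxtrace_conj (R : comUnitRingType) n (P X : 'M[R]_n) : P \in unitmx ->
  \tr (invmx P *m X *m P) = \tr X.
Proof. by move=> P_unit; rewrite mxtrace_mulC mulmxA mulmxV ?mul1mx. Qed.

Lemma eigenvalue_conj_diag_mx (F : fieldType) n (P : 'M[F]_n) (d : 'rV_n) j :
  P \in unitmx -> eigenvalue (invmx P *m diag_mx d *m P) (d 0 j).
Proof.
move=> P_unit; apply/eigenvalueP; exists ('e_j *m P).
  by rewrite !mulmxA mulmxK // -rowE row_diag_mx -scalemxAl.
rewrite mulmx_free_eq0 ?row_free_unit //.
apply/eqP => /matrixP/(_ 0 j); rewrite !mxE !eqxx.
by apply/eqP; exact: oner_neq0.
Qed.

Section RealSymmetricMatrix.
Context {R : rcfType}.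

Lemma real_complex_is_real (x : R) : (x%:C)%C \is Num.real.
Proof. by rewrite complex_real. Qed.

Lemma symmetric_mx_eigen_moments n (A : 'M[R]_n) : A^T = A ->
  exists d : 'I_n -> R, (forall j, eigenvalue A (d j)) /\
    forall m, \tr (A ^+ m) = \sum_j d j ^+ m.
Proof.
move=> A_sym; pose AC := map_mx (real_complex R) A.
have AC_herm : AC \is hermsymmx.
  apply: realsym_hermsym.
    by apply/is_hermitianmxP; rewrite expr0 scale1r map_mx_id // map_trmx A_sym.
  by apply/mxOverP => i j; rewrite mxE real_complex_is_real.
have /hermitian_normalmx/orthomx_spectralP AC_diag := AC_herm.
set P := spectralmx AC in AC_diag; set D := spectral_diag AC in AC_diag.
have P_unit : P \in unitmx by exact: spectral_unit.
have D_real j : D 0 j = ((complex.Re (D 0 j))%:C)%C.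
  by rewrite RRe_real //; move/mxOverP: (hermitian_spectral_diag_real AC_herm).
exists (fun j => complex.Re (D 0 j)); split=> [j|m].
  have := eigenvalue_conj_diag_mx D j P_unit.
  by rewrite -AC_diag D_real eigenvalue_map.
apply: (@complexI R); rewrite -trace_map_mx.
have -> : map_mx (real_complex R) (A ^+ m) = AC ^+ m by exact: rmorphXn.
rewrite AC_diag conjmx_expn // mxtrace_conj // mxtrace_diag_mx_expn rmorph_sum.
by apply: eq_bigr => j _; rewrite rmorphXn {1}D_real.
Qed.

End RealSymmetricMatrix.

Lemma eigenvalue_dim_gt0 (F : fieldType) n (A : 'M[F]_n) a :
  eigenvalue A a -> (0 < n)%N.
Proof. by case: n A => // A /eigenvalueP[v _]; rewrite thinmx0 eqxx. Qed.

Theorem lemma13 (R : realType) (n : nat) (e : rel 'I_n) (k l : nat) (s : R) :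
  distance_regular e -> regular_deg e k -> lambda_param e l -> (0 < l)%N ->
  least_eigenvalue (adjmx R e) s ->
  (k%:R / `|s| < l%:R + k%:R / l%:R :> R).
Proof.
move=> [[e_sym e_irr] _] e_reg e_lam l_gt0 [s_eig s_least].
have [->|k_gt0] := posnP k; first by rewrite !mul0r addr0 ltr0n.
have [d [d_eig d_moments]] := symmetric_mx_eigen_moments (tr_adjmx R e_sym).
apply: (least_eigenvalue_bound (d := d)); rewrite ?card_ord ?ltr0n //.
- by move=> j; apply/s_least/d_eig.
- exact: eigenvalue_dim_gt0 s_eig.
- by rewrite (eq_bigr (fun j => d j ^+ 1)) // -d_moments mxtrace_adjmx.
- by rewrite -d_moments (mxtrace_adjmx_sqr _ e_sym e_reg) natrM.
- by rewrite -d_moments (mxtrace_adjmx_cube _ e_sym e_reg e_lam) !natrM.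
Qed.
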